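(* Let $b,\beta_{vh},\beta_{hv},m,\tau_h,\tau_v,\mu_v,\tau_1,\tau_2>0$ and consider the distributed-delay system $$\dot E(t)=b\beta_{vh}mI_v(t)\Big(1-E(t)-\int_{t-\tau_1-\tau_2}^t\tfrac1{\tau_h}E(s)\,ds\Big)-\tfrac1{\tau_h}E(t),$$ $$\dot E_v(t)=b\beta_{hv}\int_{t-\tau_1}^t\tfrac1{\tau_h}E(s)\,ds\,\big(1-E_v(t)-I_v(t)\big)-\Big(\tfrac1{\tau_v}+\mu_v\Big)E_v(t),\qquad \dot I_v(t)=\tfrac1{\tau_v}E_v(t)-\mu_vI_v(t).$$ Let $$\mathcal R_0=\frac{b^2\beta_{vh}\beta_{hv}m\tau_1}{\mu_v(\mu_v\tau_v+1)}.$$ Then there exists an endemic equilibrium $(E^*,E_v^*,I_v^* )\in(0,1)^3$ (a constant stationary solution, with $E\equiv E^*$) of this system if and only if $\mathcal R_0>1$. In that case $$E^*=\frac{\mu_v\tau_h(\mathcal R_0-1)}{\mu_v\mathcal R_0(\tau_1+\tau_2+\tau_h)+b\beta_{hv}\tau_1},\quad E_v^*=\frac{\mu_v\tau_v(\mathcal R_0-1)}{\mathcal R_0(1+\mu_v\tau_v)+b\beta_{vh}m(\tau_1+\tau_2+\tau_h)},$$ $$I_v^*=\frac{\mathcal R_0-1}{\mathcal R_0(1+\mu_v\tau_v)+b\beta_{vh}m(\tau_1+\tau_2+\tau_h)}.$$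
   Context: This is the ''uniform host response'' reduction of a structured host–vector model: $E$ is the exposed host proportion, $E_v,I_v$ are the exposed and infected vector proportions, $\tau_1$ is the host infectious period, $\tau_2$ the recovery period, $\tau_h,\tau_v$ the intrinsic and extrinsic incubation periods, $b$ the biting rate, $\beta_{vh},\beta_{hv}$ transmission probabilities, $\mu_v$ the vector death rate and $m$ the vector-to-host ratio. Data are $E(t)$ on $[-\tau_1-\tau_2,0]$ and $E_v(0),I_v(0)$. *)

From Stdlib Require Import Reals.
From Coquelicot Require Import Coquelicot.
Open Scope R_scope.

Definition rhs_E (b bvh m tauh tau1 tau2 : R) (E Iv : R -> R) (t : R) : R :=
  b * bvh * m * Iv t
    * (1 - E t - RInt (fun s => / tauh * E s) (t - tau1 - tau2) t)
  - / tauh * E t.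

Definition rhs_Ev (b bhv tauh tauv muv tau1 : R) (E Ev Iv : R -> R) (t : R) : R :=
  b * bhv * RInt (fun s => / tauh * E s) (t - tau1) t * (1 - Ev t - Iv t)
  - (/ tauv + muv) * Ev t.

Definition rhs_Iv (tauv muv : R) (Ev Iv : R -> R) (t : R) : R :=
  / tauv * Ev t - muv * Iv t.

Definition is_solution (b bvh bhv m tauh tauv muv tau1 tau2 : R)
    (E Ev Iv : R -> R) : Prop :=
  forall t : R,
    is_derive E t (rhs_E b bvh m tauh tau1 tau2 E Iv t) /\
    is_derive Ev t (rhs_Ev b bhv tauh tauv muv tau1 E Ev Iv t) /\
    is_derive Iv t (rhs_Iv tauv muv Ev Iv t).

Definition is_equilibrium (b bvh bhv m tauh tauv muv tau1 tau2 : R)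
    (Es Evs Ivs : R) : Prop :=
  is_solution b bvh bhv m tauh tauv muv tau1 tau2
    (fun _ => Es) (fun _ => Evs) (fun _ => Ivs).

Definition in01 (x : R) : Prop := 0 < x < 1.

Definition basicR0 (b bvh bhv m tauv muv tau1 : R) : R :=
  b ^ 2 * bvh * bhv * m * tau1 / (muv * (muv * tauv + 1)).

(** At an equilibrium every integral is just (window length) * Es / tauh, so the system
    becomes algebraic.  The [I_v]-equation gives [Evs = muv tauv Ivs] and the [E]-equation
    gives [Es = a Ivs tauh / (1 + a Ivs T)], with [a = b bvh m] and [T = tau1 + tau2 + tauh].
    Substituted into the [E_v]-equation, and divided by the positive factor [Ivs], this
    leaves the linear equation [R0 (1 - k Ivs) = 1 + a T Ivs] with [k = 1 + muv tauv],
    whose root [(R0 - 1) / (R0 k + a T)] is positive exactly when [R0 > 1]; all three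
    closed forms then lie in [(0,1)]. *)

From Stdlib Require Import Reals Lra.
From Coquelicot Require Import Coquelicot.
Open Scope R_scope.

Lemma eq_iff_of_scaled_diff (f x y z w : R) :
  f <> 0 -> x - y = f * (z - w) -> (x = y <-> z = w).
Proof.
  intros hf hdiff; split; intros heq.
  - rewrite heq, Rminus_diag in hdiff.
    destruct (Rmult_integral _ _ (eq_sym hdiff)) as [|hzw]; [contradiction | lra].
  - rewrite heq, Rminus_diag, Rmult_0_r in hdiff; lra.
Qed.

Lemma in01_div (x y : R) : 0 < x -> x < y -> in01 (x / y).
Proof.
  intros hx hxy; split.
  - apply Rdiv_lt_0_compat; lra.
  - apply (Rdiv_lt_1 x y); lra.
Qed.

Lemma is_derive_const_iff (c t l : R) : is_derive (fun _ => c) t l <-> l = 0.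
Proof.
  split.
  - intros hd; apply is_derive_unique in hd; rewrite Derive_const in hd; auto.
  - intros ->; exact (is_derive_const c t).
Qed.

Lemma RInt_const_mult (c x y : R) : RInt (fun _ => c) x y = (y - x) * c.
Proof. rewrite RInt_const; reflexivity. Qed.

Section Equilibria.

Variables b bvh bhv m tauh tauv muv tau1 tau2 : R.
Hypotheses (hb : 0 < b) (hbvh : 0 < bvh) (hbhv : 0 < bhv) (hm : 0 < m)
  (htauh : 0 < tauh) (htauv : 0 < tauv) (hmuv : 0 < muv)
  (htau1 : 0 < tau1) (htau2 : 0 < tau2).

Local Notation a := (b * bvh * m).
Local Notation k := (1 + muv * tauv).
Local Notation T := (tau1 + tau2 + tauh).
Local Notation r0 := (basicR0 b bvh bhv m tauv muv tau1).
Local Notation Estar := (muv * tauh * (r0 - 1) / (muv * r0 * T + b * bhv * tau1)).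
Local Notation Evstar := (muv * tauv * (r0 - 1) / (r0 * k + a * T)).
Local Notation Istar := ((r0 - 1) / (r0 * k + a * T)).

Let ha : 0 < a.
Proof. repeat apply Rmult_lt_0_compat; assumption. Qed.

Let hk : 0 < muv * k.
Proof. apply Rmult_lt_0_compat; nra. Qed.

Lemma basicR0_mul : r0 * (muv * k) = b * bhv * tau1 * a.
Proof. unfold basicR0; field; nra. Qed.

Let hr0 : 0 < r0.
Proof.
  assert (hprod : 0 < r0 * (muv * k)).
  { rewrite basicR0_mul.
    repeat apply Rmult_lt_0_compat; assumption. }
  nra.
Qed.

Let hden : 0 < r0 * k + a * T.
Proof. apply Rplus_lt_0_compat; apply Rmult_lt_0_compat; nra. Qed.

Lemma is_equilibrium_iff (Es Evs Ivs : R) :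
  is_equilibrium b bvh bhv m tauh tauv muv tau1 tau2 Es Evs Ivs <->
  Es * (1 + a * Ivs * T) = a * Ivs * tauh /\
  b * bhv * tau1 * Es * (1 - Evs - Ivs) = tauh * (/ tauv + muv) * Evs /\
  Evs = muv * tauv * Ivs.
Proof.
  assert (hE : forall t,
    rhs_E b bvh m tauh tau1 tau2 (fun _ => Es) (fun _ => Ivs) t = 0 <->
    Es * (1 + a * Ivs * T) = a * Ivs * tauh).
  { intros t; apply eq_iff_of_scaled_diff with (f := - / tauh).
    - apply Ropp_neq_0_compat, Rinv_neq_0_compat; lra.
    - unfold rhs_E; rewrite RInt_const_mult; field; lra. }
  assert (hEv : forall t,
    rhs_Ev b bhv tauh tauv muv tau1 (fun _ => Es) (fun _ => Evs) (fun _ => Ivs) t = 0 <->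
    b * bhv * tau1 * Es * (1 - Evs - Ivs) = tauh * (/ tauv + muv) * Evs).
  { intros t; apply eq_iff_of_scaled_diff with (f := / tauh).
    - apply Rinv_neq_0_compat; lra.
    - unfold rhs_Ev; rewrite RInt_const_mult; field; lra. }
  assert (hIv : forall t,
    rhs_Iv tauv muv (fun _ => Evs) (fun _ => Ivs) t = 0 <-> Evs = muv * tauv * Ivs).
  { intros t; apply eq_iff_of_scaled_diff with (f := / tauv).
    - apply Rinv_neq_0_compat; lra.
    - unfold rhs_Iv; field; lra. }
  unfold is_equilibrium, is_solution.
  setoid_rewrite is_derive_const_iff.
  setoid_rewrite hE; setoid_rewrite hEv; setoid_rewrite hIv.
  split; [intros h; exact (h 0) | intros h _; exact h].
Qed.

Lemma equilibrium_reduced (Es Evs Ivs : R) (hI : 0 < Ivs) :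
  is_equilibrium b bvh bhv m tauh tauv muv tau1 tau2 Es Evs Ivs <->
  Es = a * Ivs * tauh / (1 + a * Ivs * T) /\
  r0 * (1 - k * Ivs) = 1 + a * Ivs * T /\
  Evs = muv * tauv * Ivs.
Proof.
  assert (hD : 0 < 1 + a * Ivs * T).
  { assert (0 < a * Ivs * T) by (repeat apply Rmult_lt_0_compat; lra). lra. }
  assert (hEs : Es * (1 + a * Ivs * T) = a * Ivs * tauh <->
                Es = a * Ivs * tauh / (1 + a * Ivs * T)).
  { apply eq_iff_of_scaled_diff with (f := 1 + a * Ivs * T); [lra | field; lra]. }
  (* Once [E] and [E_v] are eliminated, the [E_v]-equation is a nonzero multiple of
     the linear equation for [I_v]. *)
  assert (hEv : b * bhv * tau1 * (a * Ivs * tauh / (1 + a * Ivs * T))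
                  * (1 - muv * tauv * Ivs - Ivs)
                = tauh * (/ tauv + muv) * (muv * tauv * Ivs) <->
                r0 * (1 - k * Ivs) = 1 + a * Ivs * T).
  { apply eq_iff_of_scaled_diff with (f := muv * k * Ivs * tauh / (1 + a * Ivs * T)).
    - apply Rgt_not_eq, Rdiv_lt_0_compat; [|lra].
      apply Rmult_lt_0_compat; [apply Rmult_lt_0_compat|]; assumption.
    - transitivity (b * bhv * tau1 * a * (Ivs * tauh * (1 - k * Ivs) / (1 + a * Ivs * T))
                    - muv * k * Ivs * tauh); [field; lra|].
      rewrite <- basicR0_mul; field; lra. }
  rewrite is_equilibrium_iff, hEs.
  split; intros (-> & h & ->); [rewrite <- hEv | rewrite hEv]; auto.
Qed.

Lemma r0_equation_iff (Ivs : R) :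
  r0 * (1 - k * Ivs) = 1 + a * Ivs * T <-> Ivs = Istar.
Proof.
  apply eq_iff_of_scaled_diff with (f := - (r0 * k + a * T)); [lra | field; lra].
Qed.

Lemma Istar_gt0_iff : 0 < Istar <-> 1 < r0.
Proof.
  split; intros h.
  - assert (hnum : 0 < Istar * (r0 * k + a * T)) by nra.
    replace (Istar * (r0 * k + a * T)) with (r0 - 1) in hnum by (field; lra); lra.
  - apply Rdiv_lt_0_compat; lra.
Qed.

Lemma closed_forms_from_Istar (hr : 1 < r0) :
  a * Istar * tauh / (1 + a * Istar * T) = Estar /\ muv * tauv * Istar = Evstar.
Proof.
  split; [|field; lra].
  assert (hc : b * bhv * tau1 = r0 * (muv * k) / a).
  { rewrite basicR0_mul; field; lra. }
  assert (haT : 0 < a * T) by (apply Rmult_lt_0_compat; lra).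
  assert (0 < (r0 - 1) * (a * T)) by (apply Rmult_lt_0_compat; lra).
  assert (0 < muv * r0 * (a * T)) by (apply Rmult_lt_0_compat; [apply Rmult_lt_0_compat|]; lra).
  assert (0 < r0 * (muv * k)) by (apply Rmult_lt_0_compat; lra).
  rewrite hc; field; repeat split; apply Rgt_not_eq; lra.
Qed.

Lemma positive_equilibrium_iff (Es Evs Ivs : R) (hI : 0 < Ivs) :
  is_equilibrium b bvh bhv m tauh tauv muv tau1 tau2 Es Evs Ivs <->
  Es = Estar /\ Evs = Evstar /\ Ivs = Istar.
Proof.
  rewrite equilibrium_reduced, r0_equation_iff by exact hI.
  split; intros (-> & -> & ->); apply Istar_gt0_iff in hI;
    destruct (closed_forms_from_Istar hI) as [hE hEv]; auto.
Qed.

Lemma closed_forms_in01 (hr : 1 < r0) : in01 Estar /\ in01 Evstar /\ in01 Istar.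
Proof.
  assert (0 < b * bhv * tau1) by (repeat apply Rmult_lt_0_compat; lra).
  assert (0 < a * T) by (apply Rmult_lt_0_compat; lra).
  assert (0 < muv * r0 * (tau1 + tau2)) by (apply Rmult_lt_0_compat; nra).
  assert (0 < muv * tauh * (r0 - 1)) by (apply Rmult_lt_0_compat; nra).
  assert (0 < muv * tauv * (r0 - 1)) by (apply Rmult_lt_0_compat; nra).
  assert (0 < muv * tauh) by (apply Rmult_lt_0_compat; lra).
  assert (0 < muv * tauv) by (apply Rmult_lt_0_compat; lra).
  split; [|split]; apply in01_div; lra.
Qed.

End Equilibria.

Theorem proposition4 (b bvh bhv m tauh tauv muv tau1 tau2 : R)
  (hb : 0 < b) (hbvh : 0 < bvh) (hbhv : 0 < bhv) (hm : 0 < m)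
  (htauh : 0 < tauh) (htauv : 0 < tauv) (hmuv : 0 < muv)
  (htau1 : 0 < tau1) (htau2 : 0 < tau2) :
  let r0 := basicR0 b bvh bhv m tauv muv tau1 in
  ((exists Es Evs Ivs : R,
      in01 Es /\ in01 Evs /\ in01 Ivs /\
      is_equilibrium b bvh bhv m tauh tauv muv tau1 tau2 Es Evs Ivs)
   <-> r0 > 1) /\
  (forall Es Evs Ivs : R,
      in01 Es -> in01 Evs -> in01 Ivs ->
      is_equilibrium b bvh bhv m tauh tauv muv tau1 tau2 Es Evs Ivs ->
      Es = muv * tauh * (r0 - 1)
             / (muv * r0 * (tau1 + tau2 + tauh) + b * bhv * tau1) /\
      Evs = muv * tauv * (r0 - 1)
             / (r0 * (1 + muv * tauv) + b * bvh * m * (tau1 + tau2 + tauh)) /\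
      Ivs = (r0 - 1)
             / (r0 * (1 + muv * tauv) + b * bvh * m * (tau1 + tau2 + tauh))).
Proof.
  intros r0; subst r0.
  split; [split|].
  - intros (Es & Evs & Ivs & _ & _ & [hI _] & heq).
    apply positive_equilibrium_iff in heq as (_ & _ & ->); try assumption.
    apply Istar_gt0_iff in hI; assumption.
  - intros hr.
    destruct (closed_forms_in01 b bvh bhv m tauh tauv muv tau1 tau2)
      as (hE & hEv & hI); try assumption.
    do 3 eexists; split; [exact hE|]; split; [exact hEv|]; split; [exact hI|].
    apply positive_equilibrium_iff; try assumption.
    + apply hI.
    + repeat split.
  - intros Es Evs Ivs _ _ [hI _] heq.
    apply positive_equilibrium_iff in heq; assumption.
Qed.
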